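(* Let $f:\mathbb{R}^n\times\mathbb{R}^m\to\mathbb{R}$ be twice continuously differentiable, $\mu$-strongly convex in $x$ for every fixed $y$ and $\mu$-strongly concave in $y$ for every fixed $x$ ($\mu>0$). Write $z=(x;y)$, $F(z)=(\nabla_x f(x,y);-\nabla_y f(x,y))$, and assume the largest singular value of $\nabla F(z)$ is at most $L$ for all $z$. Let $m(z)=\frac12\|F(z)\|^2$. Then for every $z=(x;y)$, $$\frac{\mu}{L^2}m(z)\le \max_{y'\in\mathbb{R}^m}f(x,y')-\min_{x'\in\mathbb{R}^n}f(x',y)\le \frac{L}{\mu^2}m(z).$$
   Context: $\|\cdot\|$ is the Euclidean norm for vectors and the largest singular value for matrices. *)

From HB Require Import structures.
From mathcomp Require Import all_boot all_order all_algebra.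
From mathcomp Require Import all_classical all_reals all_analysis.
Set Implicit Arguments. Unset Strict Implicit. Unset Printing Implicit Defensive.
Import Order.TTheory GRing.Theory Num.Theory.
Import numFieldNormedType.Exports.
Local Open Scope ring_scope.

Section Defs.
Variable R : realType.

Definition enorm (p q : nat) (A : 'M[R]_(p, q)) : R :=
  Num.sqrt (\sum_(i < p) \sum_(j < q) A i j ^+ 2).

Definition evec (d : nat) (i : 'I_d) : 'rV[R]_d := delta_mx 0 i.

Definition pd (d : nat) (g : 'rV[R]_d -> R) (i : 'I_d) (z : 'rV[R]_d) : R :=
  derive g z (evec i).

Definition C2 (d : nat) (g : 'rV[R]_d -> R) : Prop :=
  [/\ continuous g,
      (forall i z, derivable g z (evec i)),
      (forall i, continuous (pd g i)),
      (forall i j z, derivable (pd g i) z (evec j)) &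
      (forall i j, continuous (pd (pd g i) j))].

Definition strongly_convex (k : nat) (mu : R) (h : 'rV[R]_k -> R) : Prop :=
  forall (u v : 'rV[R]_k) (t : R), 0 <= t <= 1 ->
    h (t *: u + (1 - t) *: v)
      <= t * h u + (1 - t) * h v - mu / 2 * t * (1 - t) * enorm (u - v) ^+ 2.

Definition strongly_concave (k : nat) (mu : R) (h : 'rV[R]_k -> R) : Prop :=
  strongly_convex mu (fun u => - h u).

Definition joint (n m : nat) (f : 'rV[R]_n -> 'rV[R]_m -> R) (z : 'rV[R]_(n + m)) : R :=
  f (lsubmx z) (rsubmx z).

Definition Fop (n m : nat) (f : 'rV[R]_n -> 'rV[R]_m -> R) (z : 'rV[R]_(n + m))
  : 'rV[R]_(n + m) :=
  row_mx (\row_(i < n) pd (joint f) (lshift m i) z)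
         (- \row_(j < m) pd (joint f) (rshift n j) z).

Definition jacF (n m : nat) (f : 'rV[R]_n -> 'rV[R]_m -> R) (z : 'rV[R]_(n + m))
  : 'M[R]_(n + m) :=
  \matrix_(k, l) pd (fun w => Fop f w 0 k) l z.

(* largest singular value (= operator 2-norm) of A is at most L *)
Definition spec_norm_le (p q : nat) (A : 'M[R]_(p, q)) (L : R) : Prop :=
  forall v : 'cV[R]_q, enorm (A *m v) <= L * enorm v.

Definition merit (n m : nat) (f : 'rV[R]_n -> 'rV[R]_m -> R) (z : 'rV[R]_(n + m)) : R :=
  2^-1 * enorm (Fop f z) ^+ 2.

End Defs.

(* Write A = max_y' f(x,y') - f(x,y) and B = f(x,y) - min_x' f(x',y), so that
   the gap is A + B, and g_x, g_y for the two partial gradients at (x,y), so that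
   m(z) = (|g_x|^2 + |g_y|^2) / 2.  The first-order inequality of mu-strong
   convexity, f(x',y) >= f(x,y) - |x'-x| |g_x| + mu/2 |x'-x|^2, makes f(.,y)
   coercive (so the minimum is attained) and gives 2 mu B <= |g_x|^2.  The
   Jacobian bound makes the gradient of f L-Lipschitz (mean value inequality),
   so by the descent lemma the gradient step x - g_x / L lowers f(.,y) by at
   least |g_x|^2 / (2L), whence |g_x|^2 <= 2 L B.  Symmetrically in y, and
   summing: mu (A + B) <= m(z) <= L (A + B), which rearranges to the claim. *)

From HB Require Import structures.
From mathcomp Require Import all_boot all_order all_algebra.
From mathcomp Require Import all_classical all_reals all_analysis.
From mathcomp Require Import ring lra.
Set Implicit Arguments. Unset Strict Implicit. Unset Printing Implicit Defensive.
Import Order.TTheory GRing.Theory Num.Theory.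
Import numFieldNormedType.Exports.
Local Open Scope ring_scope.
Local Open Scope classical_set_scope.

Section LineDerivative.
Variable R : realType.

Lemma is_derive_along (V1 V2 W : normedModType R) (g1 : V1 -> W) (g2 : V2 -> W)
    (x v : V1) (z w : V2) (D : W) :
  (forall t : R, g1 (x + t *: v) = g2 (z + t *: w)) ->
  is_derive z w g2 D -> is_derive x v g1 D.
Proof.
move=> g12 [d2 dv2].
have E : (fun h : R => h^-1 *: ((g1 \o shift x) (h *: v) - g1 x)) =
         (fun h : R => h^-1 *: ((g2 \o shift z) (h *: w) - g2 z)).
  apply/funext => h /=; have := g12 0; rewrite !scale0r !addr0 => ->.
  by rewrite [h *: v + x]addrC [h *: w + z]addrC g12.
by split; [rewrite /derivable E | rewrite /derive E].
Qed.

Lemma is_derive_line (V W : normedModType R) (g : V -> W) (p e : V) (s : R) (D : W) :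
  is_derive (p + s *: e) e g D -> is_derive s (1 : R) (fun t => g (p + t *: e)) D.
Proof.
by apply: is_derive_along => t; rewrite [t *: 1]mulr1 scalerDl addrA.
Qed.

End LineDerivative.

Section RealFunctions.
Variable R : realType.
Implicit Types phi dphi : R -> R.

Lemma derivable1_continuous phi dphi :
  (forall x : R, is_derive x (1 : R) phi (dphi x)) -> continuous phi.
Proof.
move=> hd x; apply: differentiable_continuous.
by apply/derivable1_diffP; exact: ex_derive.
Qed.

Lemma MVT_any_order phi dphi a b :
  (forall x : R, is_derive x (1 : R) phi (dphi x)) ->
  exists c, `|c - a| <= `|b - a| /\ phi b - phi a = dphi c * (b - a).
Proof.
move=> hd; have hc := continuous_subspaceT (derivable1_continuous hd).
have [ab|ba] := leP a b.
  have [c /andP[]] := MVT_segment ab (fun x _ => hd x) (hc `[a, b]).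
  rewrite !bnd_simp => ac cb E; exists c; split => //.
  by rewrite !ger0_norm ?subr_ge0 // lerB.
have [c /andP[]] := MVT_segment (ltW ba) (fun x _ => hd x) (hc `[b, a]).
rewrite !bnd_simp => bc ca E; exists c; split.
  by rewrite !ler0_norm ?subr_le0 ?(ltW ba) // !opprB lerB.
by rewrite -[LHS]opprB E -mulrN opprB.
Qed.

Lemma is_derive_comp_mulr phi (c s d : R) :
  is_derive (s * c) 1 phi d -> is_derive s 1 (fun t => phi (t * c)) (c * d).
Proof.
move=> hd; rewrite mulrC.
have lin : is_derive s (1 : R) (fun t : R => t * c) c.
  by apply: is_derive_along (is_derive_id (s * c) c) => t; rewrite [t *: 1]mulr1 mulrDl.
exact: (is_derive1_comp (g := fun t => t * c) hd lin).
Qed.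

Lemma is_derive0_le phi (D K c : R) : is_derive (0 : R) (1 : R) phi D ->
  (forall t, 0 < t <= 1 -> phi t - phi 0 <= t * (K + c * t)) -> D <= K.
Proof.
move=> [hd hv] H.
have slope : (fun h : R => h^-1 *: ((phi \o shift 0) (h *: 1) - phi 0)) @ 0^' --> D.
  by rewrite -hv; exact: hd.
have bound : (fun t : R => K + c * t) @ 0^'+ --> K.
  apply: cvg_at_right_filter.
  have : (fun t : R => K + c * t) @ (0 : R) --> K + c * 0.
    by apply: cvgD; [exact: cvg_cst | apply: cvgM; [exact: cvg_cst | exact: cvg_id]].
  by rewrite mulr0 addr0.
apply: (ler_cvg_to (cvg_dnbhs_at_right slope) bound); near=> t.
have t0 : 0 < t by near: t; exact: nbhs_right_gt.
have t1 : t <= 1 by near: t; exact: nbhs_right_le.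
rewrite /= [t *: 1]mulr1 addr0 [_ *: _]mulrC ler_pdivrMr // mulrC.
by apply: H; rewrite t0 t1.
Unshelve. all: by end_near.
Qed.

Lemma taylor1_ge phi dphi (M t : R) :
  (forall x : R, is_derive x (1 : R) phi (dphi x)) -> 0 <= t ->
  (forall s, 0 <= s -> - (M * s) <= dphi s - dphi 0) ->
  - (M / 2 * t ^+ 2) <= phi t - phi 0 - t * dphi 0.
Proof.
move=> hd t0 hM.
(* [q] is nondecreasing on [0, t]: its derivative is nonnegative there. *)
pose q := phi - dphi 0 \*: (@id R) + (M / 2) \*: ((@id R) * (@id R)).
have qE s : q s = phi s - dphi 0 * s + M / 2 * (s * s) by [].
have hq (x : R) : is_derive x (1 : R) q (dphi x - dphi 0 + M * x).
  rewrite /q; apply: is_derive_eq.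
  by rewrite /GRing.scale /= !mulr1; field.
have [c /andP[]] := MVT_segment t0 (fun x _ => hq x)
  (continuous_subspaceT (derivable1_continuous hq)).
rewrite !bnd_simp => c0 ct E.
have : 0 <= q t - q 0 by rewrite E mulr_ge0 ?subr_ge0 //; have := hM c c0; lra.
rewrite !qE !mul0r !mulr0 expr2; lra.
Qed.

Lemma taylor1_abs_le phi dphi (M t : R) :
  (forall x : R, is_derive x (1 : R) phi (dphi x)) -> 0 <= t ->
  (forall s, 0 <= s -> `|dphi s - dphi 0| <= M * s) ->
  `|phi t - phi 0 - t * dphi 0| <= M / 2 * t ^+ 2.
Proof.
move=> hd t0 hM; rewrite ler_norml; apply/andP; split.
  by apply: taylor1_ge => // s s0; have := hM s s0; rewrite ler_norml => /andP[].
have hdN (x : R) : is_derive x (1 : R) (fun s => - phi s) (- dphi x).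
  exact: is_deriveN.
have up s : 0 <= s -> - (M * s) <= - dphi s - - dphi 0.
  by move=> s0; have := hM s s0; rewrite ler_norml => /andP[_]; lra.
have /= := taylor1_ge hdN t0 up; lra.
Qed.
End RealFunctions.

Section EuclideanNorm.
Variable R : realType.

Definition vdot {N : nat} (a b : 'rV[R]_N) : R := \sum_j a 0 j * b 0 j.

Lemma vdot_evec N (l : 'I_N) (b : 'rV[R]_N) : vdot (evec R l) b = b 0 l.
Proof.
rewrite /vdot (bigD1 l) //= big1 => [|j jl]; first by rewrite !mxE !eqxx mul1r addr0.
by rewrite !mxE (negPf jl) andbF mul0r.
Qed.

Lemma vdot0l N (b : 'rV[R]_N) : vdot 0 b = 0.
Proof. by rewrite /vdot big1 // => j _; rewrite mxE mul0r. Qed.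

Lemma vdotBr N (a b c : 'rV[R]_N) : vdot a (b - c) = vdot a b - vdot a c.
Proof. by rewrite /vdot -sumrB; apply: eq_bigr => j _; rewrite !mxE mulrBr. Qed.

Lemma vdotNl N (a b : 'rV[R]_N) : vdot (- a) b = - vdot a b.
Proof. by rewrite /vdot -sumrN; apply: eq_bigr => j _; rewrite mxE mulNr. Qed.

Lemma vdotNr N (a b : 'rV[R]_N) : vdot a (- b) = - vdot a b.
Proof. by rewrite /vdot -sumrN; apply: eq_bigr => j _; rewrite mxE mulrN. Qed.

Lemma vdot_row_mx n1 n2 (a c : 'rV[R]_n1) (b d : 'rV[R]_n2) :
  vdot (row_mx a b) (row_mx c d) = vdot a c + vdot b d.
Proof.
by rewrite /vdot big_split_ord /=; congr (_ + _); apply: eq_bigr => j _;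
  rewrite ?row_mxEl ?row_mxEr.
Qed.

Lemma enorm_ge0 p q (A : 'M[R]_(p, q)) : 0 <= enorm A.
Proof. exact: sqrtr_ge0. Qed.

Lemma enorm_sqr N (a : 'rV[R]_N) : enorm a ^+ 2 = vdot a a.
Proof.
rewrite /enorm big_ord1 sqr_sqrtr; last by apply: sumr_ge0 => j _; exact: sqr_ge0.
by apply: eq_bigr => j _; rewrite expr2.
Qed.

Lemma enorm_tr N (a : 'rV[R]_N) : enorm a^T = enorm a.
Proof.
rewrite /enorm big_ord1; congr Num.sqrt.
by apply: eq_bigr => j _; rewrite big_ord1 mxE.
Qed.

Lemma enorm_eq N (a b : 'rV[R]_N) :
  (forall j, a 0 j ^+ 2 = b 0 j ^+ 2) -> enorm a = enorm b.
Proof. by move=> ab; rewrite /enorm !big_ord1; congr Num.sqrt; apply: eq_bigr. Qed.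

Lemma enormZ N (c : R) (a : 'rV[R]_N) : enorm (c *: a) = `|c| * enorm a.
Proof.
rewrite /enorm !big_ord1 -sqrtr_sqr -sqrtrM ?sqr_ge0 // mulr_sumr.
by congr Num.sqrt; apply: eq_bigr => j _; rewrite mxE exprMn.
Qed.

Lemma enormN N (a : 'rV[R]_N) : enorm (- a) = enorm a.
Proof. by rewrite -scaleN1r enormZ normrN normr1 mul1r. Qed.

Lemma enorm0 N : enorm (0 : 'rV[R]_N) = 0.
Proof. by rewrite -(scale0r 0) enormZ normr0 mul0r. Qed.

Lemma enorm_row_mx n1 n2 (a : 'rV[R]_n1) (b : 'rV[R]_n2) :
  enorm (row_mx a b) ^+ 2 = enorm a ^+ 2 + enorm b ^+ 2.
Proof. by rewrite !enorm_sqr vdot_row_mx. Qed.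

Lemma vdot_sqr_le N (a b : 'rV[R]_N) : vdot a b ^+ 2 <= vdot a a * vdot b b.
Proof.
set S := vdot a b; set A := vdot a a; set B := vdot b b.
have quad t : 0 <= A * t ^+ 2 - 2 * S * t + B.
  have -> : A * t ^+ 2 - 2 * S * t + B = vdot (t *: a - b) (t *: a - b).
    rewrite [RHS](_ : _ = \sum_j (a 0 j * a 0 j * t ^+ 2
        - 2 * (a 0 j * b 0 j) * t + b 0 j * b 0 j)).
      by rewrite big_split sumrB /= -!mulr_suml -mulr_sumr.
    by apply: eq_bigr => j _; rewrite !mxE; ring.
  by rewrite -enorm_sqr sqr_ge0.
have A0 : 0 <= A by rewrite /A -enorm_sqr sqr_ge0.
have [Ap|] := ltrP 0 A.
  have := quad (S / A).
  have -> : A * (S / A) ^+ 2 - 2 * S * (S / A) + B = B - S ^+ 2 / A.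
    by field; rewrite gt_eqF.
  by rewrite subr_ge0 ler_pdivrMr // mulrC.
move=> A_le0; have A00 : A = 0 by apply/eqP; rewrite eq_le A_le0 A0.
have [->|S0] := eqVneq S 0; first by rewrite expr0n A00 mul0r.
have := quad ((B + 1) / (2 * S)); rewrite A00.
have -> : 0 * ((B + 1) / (2 * S)) ^+ 2 - 2 * S * ((B + 1) / (2 * S)) + B = -1.
  by field.
by rewrite ler0N1.
Qed.

Lemma normr_vdot_le N (a b : 'rV[R]_N) : `|vdot a b| <= enorm a * enorm b.
Proof.
rewrite -ler_sqr ?nnegrE ?mulr_ge0 ?enorm_ge0 // real_normK ?num_real // exprMn !enorm_sqr.
exact: vdot_sqr_le.
Qed.

Lemma normr_le_enorm N (a : 'rV[R]_N) : `|a| <= enorm a.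
Proof.
rewrite [leLHS]mx_normrE; apply: bigmax_le; first exact: enorm_ge0.
move=> [i j] _ /=; rewrite (ord1 i) -sqrtr_sqr /enorm big_ord1; apply: ler_wsqrtr.
by rewrite (bigD1 j) //= lerDl; apply: sumr_ge0 => k _; exact: sqr_ge0.
Qed.

End EuclideanNorm.

Lemma continuous_row_mxl (R : realType) p n1 n2 (b : 'M[R]_(p, n2)) :
  continuous (fun a : 'M[R]_(p, n1) => row_mx a b).
Proof.
move=> u A /nbhs_ballP[e /= e0 eA]; apply/nbhs_ballP; exists e => //= v [_ uv].
apply: eA; split => // i j; case: (split_ordP j) => k ->.
  by rewrite !row_mxEl.
by rewrite !row_mxEr; exact: ballxx.
Qed.

Lemma continuous_row_mxr (R : realType) p n1 n2 (a : 'M[R]_(p, n1)) :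
  continuous (fun b : 'M[R]_(p, n2) => row_mx a b).
Proof.
move=> u A /nbhs_ballP[e /= e0 eA]; apply/nbhs_ballP; exists e => //= v [_ uv].
apply: eA; split => // i j; case: (split_ordP j) => k ->.
  by rewrite !row_mxEl; exact: ballxx.
by rewrite !row_mxEr.
Qed.

Section DirectionalDerivative.
Variable R : realType.

Lemma is_derive_dirZ (V : normedModType R) (g : V -> R) (x v : V) (c D : R) :
  is_derive x v g D -> is_derive x (c *: v) g (c * D).
Proof.
move=> hd.
have line : is_derive (0 * c) (1 : R) (fun t => g (x + t *: v)) D.
  by rewrite mul0r; apply: is_derive_line; rewrite scale0r addr0.
apply: is_derive_along (is_derive_comp_mulr line) => t.
by rewrite add0r [t *: 1]mulr1 scalerA mulrC.
Qed.

Lemma is_derive_dirD (V : normedModType R) (g : V -> R) (u e : V) (Du De : V -> R) :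
  (forall z, is_derive z u g (Du z)) -> (forall z, is_derive z e g (De z)) ->
  continuous De -> forall z, is_derive z (u + e) g (Du z + De z).
Proof.
move=> hu he hc z.
have line p s : is_derive s (1 : R) (fun t => g (p + t *: e)) (De (p + s *: e)).
  by apply: is_derive_line; exact: he.
(* By the MVT on the segment from [z + h *: u] along [e], and continuity of [De]. *)
have slope_e : (fun h : R => h^-1 *: (g (h *: e + (z + h *: u)) - g (z + h *: u)))
    @ 0^' --> De z.
  apply/cvgrPdist_lt => eps eps0.
  have /cvgrPdist_lt/(_ eps eps0)/nbhs_ballP[del del0 Hb] := hc z.
  have K0 : 0 < `|u| + `|e| + 1 by rewrite ltr_wpDl // addr_ge0.
  near=> h.
  have hn0 : h != 0 by near: h; exact: nbhs_dnbhs_neq.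
  have hlt : `|h| < del / (`|u| + `|e| + 1).
    by near: h; apply: dnbhs0_lt; exact: divr_gt0.
  have [c [hc1 hc2]] := MVT_any_order 0 h (line (z + h *: u)).
  rewrite !subr0 scale0r addr0 in hc1 hc2.
  rewrite [h *: e + _]addrC hc2 /= [_ *: _]mulrC mulfK //.
  apply: Hb; rewrite -ball_normE /ball_ /= -addrA opprD addrA subrr sub0r normrN.
  apply: le_lt_trans (ler_normD _ _) _; rewrite !normrZ.
  apply: le_lt_trans (_ : _ <= `|h| * (`|u| + `|e| + 1)) _; last by rewrite -ltr_pdivlMr.
  rewrite mulrDr mulrDr mulr1 -addrA lerD2l.
  by apply: le_trans (_ : _ <= `|h| * `|e|) _; [rewrite ler_wpM2r | rewrite lerDl].
have [du dvu] := hu z.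
have slope_u : (fun h : R => h^-1 *: ((g \o shift z) (h *: u) - g z)) @ 0^' --> Du z.
  by rewrite -dvu; exact: du.
have E : (fun h : R => h^-1 *: ((g \o shift z) (h *: (u + e)) - g z)) =
  (fun h : R => h^-1 *: (g (h *: e + (z + h *: u)) - g (z + h *: u)) +
   h^-1 *: ((g \o shift z) (h *: u) - g z)).
  apply/funext => h /=; rewrite -scalerDr; congr (_ *: _).
  rewrite [h *: u + z]addrC addrA subrK scalerDr; congr (g _ - _).
  by rewrite [h *: u + _]addrC -addrA [h *: u + z]addrC.
have slope : (fun h : R => h^-1 *: ((g \o shift z) (h *: (u + e)) - g z)) @ 0^'
    --> Du z + De z by rewrite E addrC; exact: cvgD.
by split; [apply/cvg_ex; exists (Du z + De z) | exact: cvg_lim].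
Unshelve. all: by end_near.
Qed.

End DirectionalDerivative.

Section Gradient.
Variables (R : realType) (N : nat) (g : 'rV[R]_N -> R).

Definition grad (z : 'rV[R]_N) : 'rV[R]_N := \row_l pd g l z.

Hypothesis g_derivable : forall l z, derivable g z (evec R l).
Hypothesis pd_continuous : forall l, continuous (pd g l).

Lemma is_derive_grad z w : is_derive z w g (vdot w (grad z)).
Proof.
suff step s : (forall z, is_derive z (\sum_(l <- s) w 0 l *: evec R l) g
                                   (\sum_(l <- s) w 0 l * pd g l z)) /\
              continuous (fun z => \sum_(l <- s) w 0 l * pd g l z).
  have [+ _] := step (index_enum 'I_N); rewrite /evec -row_sum_delta => /(_ z).
  by congr is_derive; apply: eq_bigr => l _; rewrite mxE.
elim: s => [|a s [IHd IHc]].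
  split=> [y|]; first by rewrite !big_nil; exact: is_derive0.
  by under eq_fun do rewrite big_nil; exact: cst_continuous.
have da y : is_derive y (w 0 a *: evec R a) g (w 0 a * pd g a y).
  exact/is_derive_dirZ/derivableP.
have ca : continuous (fun y => w 0 a * pd g a y).
  by move=> y; apply: continuousM; [exact: cst_continuous | exact: pd_continuous].
split=> [y|].
  rewrite !big_cons addrC [X in is_derive _ _ _ X]addrC.
  exact: is_derive_dirD.
suff -> : (fun y => \sum_(l <- a :: s) w 0 l * pd g l y) =
    (fun y => w 0 a * pd g a y) + (fun y => \sum_(l <- s) w 0 l * pd g l y).
  by move=> y; apply: continuousD; [exact: ca | exact: IHc].
by apply/funext => y; rewrite big_cons.
Qed.

End Gradient.

Section MeanValueInequality.
Variables (R : realType) (N K : nat) (Phi : 'rV[R]_N -> 'rV[R]_K).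
Variables (J : 'rV[R]_N -> 'M[R]_(K, N)) (L : R).
Hypothesis L_ge0 : 0 <= L.
Hypothesis is_derive_Phi :
  forall k z w, is_derive z w (fun y => Phi y 0 k) ((J z *m w^T) k 0).
Hypothesis J_bounded : forall z, spec_norm_le (J z) L.

Lemma lipschitz_of_jacobian_bounded z z' :
  enorm (Phi z' - Phi z) <= L * enorm (z' - z).
Proof.
set u := Phi z' - Phi z; set w := z' - z.
pose psi := \sum_k (fun t : R => u 0 k * Phi (z + t *: w) 0 k).
have dpsi s : is_derive s (1 : R) psi
    (\sum_k u 0 k * (J (z + s *: w) *m w^T) k 0).
  apply: is_derive_sum => k.
  exact: is_deriveZ (is_derive_line (is_derive_Phi k (z + s *: w) w)).
have [c [_ E]] := MVT_any_order 0 1 dpsi.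
set v := J (z + c *: w) *m w^T in E.
have uu : enorm u ^+ 2 <= enorm u * (L * enorm w).
  have -> : enorm u ^+ 2 = vdot u v^T.
    move: E; rewrite subr0 mulr1 /psi !fct_sumE -sumrB scale1r scale0r addr0.
    rewrite /w addrC subrK enorm_sqr => E.
    have -> : vdot u v^T = \sum_k u 0 k * v k 0.
      by rewrite /vdot; apply: eq_bigr => k _; rewrite [v^T _ _]mxE.
    rewrite -E /vdot; apply: eq_bigr => k _.
    by rewrite -mulrBr; congr (_ * _); rewrite /u !mxE.
  apply: le_trans (ler_norm _) _; apply: le_trans (normr_vdot_le _ _) _.
  apply: ler_wpM2l; first exact: enorm_ge0.
  by rewrite -(enorm_tr v^T) trmxK -(enorm_tr w); exact: J_bounded.
have := enorm_ge0 u; rewrite le_eqVlt => /orP[/eqP <-|u_gt0].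
  by rewrite mulr_ge0 ?enorm_ge0.
by rewrite expr2 ler_pM2l in uu.
Qed.

End MeanValueInequality.

Section DescentLemma.
Variables (R : realType) (N : nat) (K : R).
Variables (g : 'rV[R]_N -> R) (dg : 'rV[R]_N -> 'rV[R]_N).
Hypothesis is_derive_g : forall z w, is_derive z w g (vdot w (dg z)).
Hypothesis dg_lipschitz : forall z z', enorm (dg z' - dg z) <= K * enorm (z' - z).

Lemma descent_lemma p w t : 0 <= t ->
  `|g (p + t *: w) - g p - t * vdot w (dg p)| <= K / 2 * t ^+ 2 * enorm w ^+ 2.
Proof.
move=> t0; have line s := is_derive_line (is_derive_g (p + s *: w) w).
have slope_lipschitz s : 0 <= s ->
    `|vdot w (dg (p + s *: w)) - vdot w (dg (p + 0 *: w))| <= K * enorm w ^+ 2 * s.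
  move=> s0; rewrite scale0r addr0 -vdotBr; apply: le_trans (normr_vdot_le _ _) _.
  apply: le_trans (ler_wpM2l (enorm_ge0 w) (dg_lipschitz _ _)) _.
  rewrite addrAC subrr add0r enormZ ger0_norm //.
  by rewrite [leRHS](_ : _ = enorm w * (K * (s * enorm w))) //; ring.
have := taylor1_abs_le line t0 slope_lipschitz; rewrite /= scale0r addr0.
suff -> : K / 2 * t ^+ 2 * enorm w ^+ 2 = K * enorm w ^+ 2 / 2 * t ^+ 2 by [].
by ring.
Qed.

End DescentLemma.

Lemma exists_minimizer (R : realType) k (h : 'rV[R]_k -> R) (x0 : 'rV[R]_k) (r : R) :
  continuous h -> 0 <= r -> (forall x, r < `|x0 - x| -> h x0 <= h x) ->
  exists xm, forall x, h xm <= h x.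
Proof.
move=> hc r0 far.
pose B := [set x : 'rV[R]_k | `|x0 - x| <= r].
have x0B : B x0 by rewrite /B /= subrr normr0.
have B_compact : compact B.
  apply: bounded_closed_compact; last exact: closed_closed_ball_.
  exists (`|x0| + r); split; first exact: num_real.
  move=> M lt_M x /= Bx; apply: le_trans (ltW lt_M).
  rewrite -[x](subKr x0); apply: le_trans (ler_normB _ _) _; exact: lerD.
have [xm _ xm_min] := EVT_min_rV (ex_intro _ x0 x0B) B_compact (continuous_subspaceT hc).
exists xm => x; have [Bx|farx] := leP `|x0 - x| r; first by apply: xm_min; rewrite inE.
by apply: le_trans (far x farx); apply: xm_min; rewrite inE.
Qed.

Section StronglyConvex.
Variables (R : realType) (k : nat) (mu : R) (h : 'rV[R]_k -> R).
Hypothesis mu_gt0 : 0 < mu.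
Hypothesis h_convex : strongly_convex mu h.

Lemma strongly_convex_first_order x x' D : is_derive x (x' - x) h D ->
  h x + D + mu / 2 * enorm (x' - x) ^+ 2 <= h x'.
Proof.
move=> hd.
have line : is_derive (0 : R) (1 : R) (fun t => h (x + t *: (x' - x))) D.
  by apply: is_derive_line; rewrite scale0r addr0.
suff : D <= h x' - h x - mu / 2 * enorm (x' - x) ^+ 2 by lra.
apply: (is_derive0_le (c := mu / 2 * enorm (x' - x) ^+ 2) line) => t /andP[t0 t1].
have := h_convex x' x (t := t); rewrite t1 ltW //= scale0r addr0.
have -> : t *: x' + (1 - t) *: x = x + t *: (x' - x).
  by apply/matrixP => i j; rewrite !mxE; ring.
lra.
Qed.

Variables (x : 'rV[R]_k) (d : 'rV[R]_k).
Hypothesis h_grad : forall v, is_derive x v h (vdot v d).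

Lemma strongly_convex_lower_bound x' :
  h x - enorm (x' - x) * enorm d + mu / 2 * enorm (x' - x) ^+ 2 <= h x'.
Proof.
have := strongly_convex_first_order (h_grad (x' - x)).
have := normr_vdot_le (x' - x) d; rewrite ler_norml => /andP[+ _]; lra.
Qed.

Lemma strongly_convex_gap_le x' : 2 * mu * (h x - h x') <= enorm d ^+ 2.
Proof.
have := strongly_convex_lower_bound x'; set a := enorm (x' - x); set e := enorm d => H.
have : 2 * mu * (h x - h x') <= 2 * mu * (a * e - mu / 2 * a ^+ 2).
  by rewrite ler_pM2l ?mulr_gt0 //; lra.
have -> : 2 * mu * (a * e - mu / 2 * a ^+ 2) = e ^+ 2 - (mu * a - e) ^+ 2 by field.
have := sqr_ge0 (mu * a - e); lra.
Qed.

Lemma strongly_convex_exists_min : continuous h -> exists xm, forall x', h xm <= h x'.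
Proof.
move=> hc; apply: (exists_minimizer hc (r := 2 * enorm d / mu)).
  by rewrite divr_ge0 ?mulr_ge0 ?enorm_ge0 ?ltW.
move=> x' far; have := strongly_convex_lower_bound x'.
have : 2 * enorm d < enorm (x' - x) * mu.
  by rewrite -ltr_pdivrMr //; apply: lt_le_trans far _; rewrite distrC; exact: normr_le_enorm.
have := enorm_ge0 (x' - x); nra.
Qed.

Lemma strongly_convex_min_gap (K : R) : 0 < K -> continuous h ->
  (forall t, 0 <= t ->
     h (x - t *: d) <= h x - t * enorm d ^+ 2 + K / 2 * t ^+ 2 * enorm d ^+ 2) ->
  exists xm, (forall x', h xm <= h x') /\
    2 * mu * (h x - h xm) <= enorm d ^+ 2 <= 2 * K * (h x - h xm).
Proof.
move=> K_gt0 hc descent; have [xm xm_min] := strongly_convex_exists_min hc.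
exists xm; split => //; rewrite strongly_convex_gap_le /=.
have Kinv_ge0 : 0 <= K^-1 by rewrite invr_ge0 ltW.
have := le_trans (xm_min _) (descent _ Kinv_ge0); set e := enorm d ^+ 2.
have -> : h x - K^-1 * e + K / 2 * K^-1 ^+ 2 * e = h x - e / (2 * K).
  by field; rewrite gt_eqF.
move=> H; have : e / (2 * K) <= h x - h xm by lra.
by rewrite ler_pdivrMr ?mulr_gt0 // mulrC.
Qed.

End StronglyConvex.

Section SaddleFunction.
Variables (R : realType) (n m : nat) (f : 'rV[R]_n -> 'rV[R]_m -> R).
Local Notation G := (joint f).
Hypothesis G_C2 : C2 G.

Lemma joint_row_mx x y : G (row_mx x y) = f x y.
Proof. by rewrite /joint row_mxKl row_mxKr. Qed.

Lemma is_derive_joint z w : is_derive z w G (vdot w (grad G z)).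
Proof. by case: G_C2 => _ dG cG _ _; exact: is_derive_grad. Qed.

Lemma is_derive_pd_joint k z w : is_derive z w (pd G k) (vdot w (grad (pd G k) z)).
Proof. by case: G_C2 => _ _ _ dG cG; exact: is_derive_grad. Qed.

Definition Fsign (k : 'I_(n + m)) : R := if (k < n)%N then 1 else -1.

Lemma Fsign_sqr k : Fsign k ^+ 2 = 1.
Proof. by rewrite /Fsign; case: ifP; rewrite ?sqrrN expr1n. Qed.

Lemma Fop_grad z : Fop f z = \row_k (Fsign k * grad G z 0 k).
Proof.
apply/rowP => k; rewrite /Fop /Fsign !mxE; case: (split_ordP k) => i ->.
  by rewrite !mxE mul1r.
by rewrite !mxE mulN1r.
Qed.

Lemma enorm_Fop_grad z z' : enorm (Fop f z' - Fop f z) = enorm (grad G z' - grad G z).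
Proof.
apply: enorm_eq => j; rewrite !Fop_grad !mxE -mulrN -mulrDr exprMn.
by rewrite Fsign_sqr mul1r.
Qed.

Lemma merit_grad z : merit f z =
  2^-1 * (enorm (lsubmx (grad G z)) ^+ 2 + enorm (rsubmx (grad G z)) ^+ 2).
Proof.
rewrite /merit -enorm_row_mx hsubmxK; congr (_ * _ ^+ 2).
by apply: enorm_eq => j; rewrite Fop_grad mxE exprMn Fsign_sqr mul1r.
Qed.

Lemma is_derive_Fop k z w :
  is_derive z w (fun y => Fop f y 0 k) ((jacF f z *m w^T) k 0).
Proof.
have dF v : is_derive z v (fun y => Fop f y 0 k) (Fsign k * vdot v (grad (pd G k) z)).
  have -> : (fun y => Fop f y 0 k) = Fsign k \*: pd G k.
    by apply/funext => y; rewrite Fop_grad !mxE.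
  exact: is_deriveZ (is_derive_pd_joint _ _ _).
have jacE l : jacF f z k l = Fsign k * grad (pd G k) z 0 l.
  by rewrite mxE /pd (@derive_val _ _ _ _ _ _ _ (dF _)) vdot_evec.
apply: is_derive_eq (dF w) _; rewrite mxE /vdot mulr_sumr.
by apply: eq_bigr => l _; rewrite jacE [w^T _ _]mxE mulrCA [RHS]mulrC.
Qed.

Lemma grad_joint_lipschitz (K : R) : 0 <= K -> (forall z, spec_norm_le (jacF f z) K) ->
  forall z z', enorm (grad G z' - grad G z) <= K * enorm (z' - z).
Proof.
move=> K_ge0 jacF_bounded z z'; rewrite -enorm_Fop_grad.
exact: lipschitz_of_jacobian_bounded K_ge0 is_derive_Fop jacF_bounded z z'.
Qed.

Lemma is_derive_partial_x x y v :
  is_derive x v (fun x' => f x' y) (vdot v (lsubmx (grad G (row_mx x y)))).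
Proof.
have dG := is_derive_joint (row_mx x y) (row_mx v 0).
rewrite -[grad G _]hsubmxK vdot_row_mx vdot0l addr0 in dG.
have line t : f (x + t *: v) y = G (row_mx x y + t *: row_mx v 0).
  by rewrite scale_row_mx add_row_mx scaler0 addr0 joint_row_mx.
exact: (is_derive_along (g1 := fun x' => f x' y) line dG).
Qed.

Lemma is_derive_partial_y x y v :
  is_derive y v (fun y' => f x y') (vdot v (rsubmx (grad G (row_mx x y)))).
Proof.
have dG := is_derive_joint (row_mx x y) (row_mx 0 v).
rewrite -[grad G _]hsubmxK vdot_row_mx vdot0l add0r in dG.
have line t : f x (y + t *: v) = G (row_mx x y + t *: row_mx 0 v).
  by rewrite scale_row_mx add_row_mx scaler0 addr0 joint_row_mx.
exact: (is_derive_along (g1 := fun y' => f x y') line dG).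
Qed.

Variables (mu K : R).
Hypothesis mu_gt0 : 0 < mu.
Hypothesis K_gt0 : 0 < K.
Hypothesis f_convex : forall y, strongly_convex mu (fun x => f x y).
Hypothesis f_concave : forall x, strongly_concave mu (fun y => f x y).
Hypothesis jacF_bounded : forall z, spec_norm_le (jacF f z) K.

Lemma joint_descent z w t : 0 <= t ->
  `|G (z + t *: w) - G z - t * vdot w (grad G z)| <= K / 2 * t ^+ 2 * enorm w ^+ 2.
Proof.
exact: descent_lemma is_derive_joint (grad_joint_lipschitz (ltW K_gt0) jacF_bounded) z w t.
Qed.

Lemma partial_min_gap x y : exists xm, (forall x', f xm y <= f x' y) /\
  2 * mu * (f x y - f xm y) <= enorm (lsubmx (grad G (row_mx x y))) ^+ 2
                            <= 2 * K * (f x y - f xm y).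
Proof.
set d := lsubmx _.
apply: (strongly_convex_min_gap mu_gt0 (f_convex y) (is_derive_partial_x x y) K_gt0).
  have -> : (fun x' => f x' y) = G \o (row_mx ^~ y).
    by apply/funext => x' /=; rewrite joint_row_mx.
  move=> x'; apply: continuous_comp; first exact: continuous_row_mxl.
  by have [cG _ _ _ _] := G_C2; exact: cG.
move=> t t0; rewrite -/d; have := joint_descent (row_mx x y) (row_mx (- d) 0) t0.
rewrite scale_row_mx add_row_mx scaler0 addr0 !joint_row_mx scalerN.
rewrite -[grad G _]hsubmxK vdot_row_mx vdot0l addr0 -/d vdotNl -enorm_sqr.
rewrite enorm_row_mx enorm0 enormN expr0n addr0 ler_norml => /andP[_]; lra.
Qed.

Lemma partial_max_gap x y : exists ym, (forall y', f x y' <= f x ym) /\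
  2 * mu * (f x ym - f x y) <= enorm (rsubmx (grad G (row_mx x y))) ^+ 2
                            <= 2 * K * (f x ym - f x y).
Proof.
set e := rsubmx _.
have grad_neg v : is_derive y v (fun y' => - f x y') (vdot v (- e)).
  by rewrite vdotNr; apply: is_deriveN; exact: is_derive_partial_y.
have [||ym [ym_max bounds]] := strongly_convex_min_gap mu_gt0 (f_concave x) grad_neg K_gt0.
- have -> : (fun y' => - f x y') = (fun y' => - (G \o row_mx x) y').
    by apply/funext => y' /=; rewrite joint_row_mx.
  move=> y'; apply: continuousN; apply: continuous_comp; first exact: continuous_row_mxr.
  by have [cG _ _ _ _] := G_C2; exact: cG.
- move=> t t0; rewrite -/e; have := joint_descent (row_mx x y) (row_mx 0 e) t0.
  rewrite scale_row_mx add_row_mx scaler0 addr0 !joint_row_mx scalerN opprK.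
  rewrite -[grad G _]hsubmxK vdot_row_mx vdot0l add0r -/e -enorm_sqr.
  rewrite enorm_row_mx enorm0 enormN expr0n add0r ler_norml => /andP[+ _]; lra.
exists ym; split; first by move=> y'; have := ym_max y'; lra.
by move: bounds; rewrite enormN !opprK !(addrC (- _)).
Qed.

Lemma saddle_gap_sandwich x y : exists ym xm,
  [/\ forall y', f x y' <= f x ym, forall x', f xm y <= f x' y &
      mu * (f x ym - f xm y) <= merit f (row_mx x y) <= K * (f x ym - f xm y)].
Proof.
have [xm [xm_min /andP[lox upx]]] := partial_min_gap x y.
have [ym [ym_max /andP[loy upy]]] := partial_max_gap x y.
by exists ym, xm; split => //; rewrite merit_grad; apply/andP; split; lra.
Qed.

End SaddleFunction.

Lemma sandwich_bounds (R : realFieldType) (mu L S Q : R) :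
  0 < mu -> 0 < L -> 0 <= S -> mu * S <= Q <= L * S ->
  mu / L ^+ 2 * Q <= S <= L / mu ^+ 2 * Q.
Proof.
move=> mu_gt0 L_gt0 S_ge0 /andP[lo up].
have muS_le : mu * S <= L * S by apply: le_trans up.
apply/andP; split.
  rewrite mulrAC ler_pdivrMr ?exprn_gt0 //; nra.
rewrite mulrAC ler_pdivlMr ?exprn_gt0 //; nra.
Qed.

Theorem proposition2p5 (R : realType) (n m : nat)
    (f : 'rV[R]_n -> 'rV[R]_m -> R) (mu L : R) :
  0 < mu ->
  C2 (joint f) ->
  (forall y, strongly_convex mu (fun x => f x y)) ->
  (forall x, strongly_concave mu (fun y => f x y)) ->
  (forall z, spec_norm_le (jacF f z) L) ->
  forall (x : 'rV[R]_n) (y : 'rV[R]_m),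
    exists (ymax : 'rV[R]_m) (xmin : 'rV[R]_n),
      (forall y', f x y' <= f x ymax) /\
      (forall x', f xmin y <= f x' y) /\
      mu / L ^+ 2 * merit f (row_mx x y) <= f x ymax - f xmin y /\
      f x ymax - f xmin y <= L / mu ^+ 2 * merit f (row_mx x y).
Proof.
move=> mu_gt0 fC2 f_convex f_concave jacF_bounded x y.
have [L_gt0|L_le0] := ltrP 0 L.
  have [ym [xm [ym_max xm_min bounds]]] :=
    saddle_gap_sandwich fC2 mu_gt0 L_gt0 f_convex f_concave jacF_bounded x y.
  have gap_ge0 : 0 <= f x ym - f xm y by have := ym_max y; have := xm_min x; lra.
  have /andP[lo up] := sandwich_bounds mu_gt0 L_gt0 gap_ge0 bounds.
  by exists ym, xm.
(* For L <= 0 the sandwich with the constant mu / 2 < mu forces gap and merit to vanish. *)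
have half_mu_gt0 : 0 < mu / 2 by rewrite divr_gt0.
have jacF_bounded' z : spec_norm_le (jacF f z) (mu / 2).
  move=> v; apply: le_trans (jacF_bounded z v) _.
  by rewrite ler_wpM2r ?enorm_ge0 //; lra.
have [ym [xm [ym_max xm_min /andP[lo up]]]] :=
  saddle_gap_sandwich fC2 mu_gt0 half_mu_gt0 f_convex f_concave jacF_bounded' x y.
have gap0 : f x ym - f xm y = 0.
  have := ym_max y; have := xm_min x; nra.
have merit0 : merit f (row_mx x y) = 0 by move: lo up; rewrite gap0 !mulr0; lra.
by exists ym, xm; rewrite gap0 merit0 !mulr0.
Qed.
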